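(* For each positive integer $N$, let $$f^{(2)}(N)=\{\, y\in\mathbb{R} \;:\; y\equiv \sqrt{2n} \pmod 1 \text{ for some } n\in\mathbb{N},\ 2n\le N,\ \sqrt{2n}\notin\mathbb{N}\,\},$$ the set of fractional parts of $\sqrt{2n}$ (for $2n\le N$ not a perfect square), extended periodically with period $1$. For a set $A\subset\mathbb{R}$ and $x\in\mathbb{R}$ define $$\operatorname{gap}_x(A)=\inf\{y\in A: y>x\}-\sup\{y\in A: y<x\},$$ and set $G^{(2)}(x)=\lim_{N\to\infty}2\sqrt{N}\,\operatorname{gap}_x(f^{(2)}(N))$. Then for coprime integers $p,q$ with $q\ge 2$, $$G^{(2)}\!\left(\tfrac{p}{q}\right)=\begin{cases}\frac{4}{q} & q\equiv 2 \pmod 4,\\ \frac{2}{q} & q\equiv 0 \pmod 4,\\ \frac{1}{q} & q\equiv 1 \pmod 2.\end{cases}$$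
   Context: $\mathbb{N}$ denotes the positive integers. The fractional part of a real number $t$ is $t-\lfloor t\rfloor$. *)

From Stdlib Require Import Reals ZArith.
From Coquelicot Require Import Coquelicot.
Open Scope R_scope.

Definition f2 (N : nat) : R -> Prop :=
  fun y => exists (n : nat) (k : Z),
    (1 <= n)%nat /\ (2 * n <= N)%nat /\
    ~ (exists m : nat, sqrt (INR (2 * n)) = INR m) /\
    y = sqrt (INR (2 * n)) + IZR k.

(* gap_x(A) = inf {y in A | y > x} - sup {y in A | y < x}.
   inf / sup are taken in the extended reals (Coquelicot's Glb_Rbar /
   Lub_Rbar) and projected to R with [real]; for all N >= 2 both sets are
   nonempty and bounded on the relevant side, so both values are finite. *)
Definition gap (x : R) (A : R -> Prop) : R :=
  real (Glb_Rbar (fun y => A y /\ x < y)) - real (Lub_Rbar (fun y => A y /\ y < x)).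

Definition G2seq (x : R) (N : nat) : R := 2 * sqrt (INR N) * gap x (f2 N).

From Stdlib Require Import Reals ZArith Lia Lra.
From Coquelicot Require Import Coquelicot.

(* Write [x = p / q]. A point [s + k] of [f2 N], [s = sqrt (2 n)], lies at signed distance
   [(q s - a) / q = (2 n q^2 - a^2) / (q (q s + a))] from [x], where [a = p - q k] runs over
   the residue class [p + qZ]. Modulo [2 q^2] the squares of this class fill exactly the coset
   [p^2 + MZ], with [M = q] for odd [q], [M = 2 q] for [q = 0 mod 4] and [M = 4 q] for
   [q = 2 mod 4]. Hence the numerator is [c] modulo [M], where [0 < c < M] is the residue of
   [-p^2]: its least positive value is [c], its largest negative value is [c - M], and both
   are attained with [a] just below [q sqrt N], where [q s + a] is about [2 q sqrt N]. The two
   gaps around [x] are thus asymptotic to [c / (2 q^2 sqrt N)] and [(M - c) / (2 q^2 sqrt N)],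
   and [2 sqrt N] times their sum tends to [M / q^2]. *)

Open Scope Z_scope.

Definition class_square_modulus (p q M : Z) : Prop :=
  (forall a, (q | a - p) -> (M | a * a - p * p)) /\
  (forall j, exists a, (q | a - p) /\ (2 * q * q | a * a - p * p + M * j)).

Lemma linear_congruence_solvable (p q b : Z) :
  Z.gcd p q = 1 -> exists t, (q | p * t + b).
Proof.
  intros Hcop. destruct (Z.gcd_bezout p q 1 Hcop) as [u [v Huv]].
  exists (- b * u), (b * v).
  replace (p * (- b * u) + b) with (b * (1 - u * p)) by ring.
  rewrite <- Huv. ring.
Qed.

Lemma consecutive_product_even (t : Z) : exists e, t * (t + 1) = 2 * e.
Proof.
  destruct (Z.Even_or_Odd t) as [[i ->] | [i ->]].
  - exists (i * (2 * i + 1)). ring.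
  - exists ((2 * i + 1) * (i + 1)). ring.
Qed.

Lemma class_square_modulus_odd (p q : Z) :
  Z.gcd p q = 1 -> Z.odd q = true -> class_square_modulus p q q.
Proof.
  intros Hcop Hodd. apply Z.odd_spec in Hodd as [h Hh].
  split.
  - intros a [t Ht]. exists (t * t * q + 2 * p * t).
    replace a with (t * q + p) by lia. ring.
  - intros j.
    destruct (linear_congruence_solvable p q ((h + 1) * j) Hcop) as [t1 [A HA]].
    (* [2 (h + 1) = q + 1], so [t1] solves [2 p t1 + j = B q]; adding [q (B + t1)]
       fixes the parity without changing the class of [t] modulo [q]. *)
    set (B := 2 * A - j).
    assert (HB : 2 * p * t1 + j = B * q) by (unfold B; lia).
    set (t := t1 + q * (B + t1)).
    destruct (consecutive_product_even (t - 1)) as [e He].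
    assert (Htt : t * t = 2 * e + t) by lia.
    exists (p + q * t). split; [exists t; ring |].
    exists ((h + 1 + p) * (B + t1) + e).
    replace j with (B * q - 2 * p * t1) by lia.
    transitivity (q * q * (B + 2 * p * (B + t1) + t * t)); [unfold t; ring |].
    rewrite Htt. unfold t. rewrite Hh. ring.
Qed.

Lemma odd_of_coprime_even (p q : Z) :
  Z.gcd p q = 1 -> (2 | q) -> exists p', p = 2 * p' + 1.
Proof.
  intros Hcop Hq. destruct (Z.Even_or_Odd p) as [[p' Hp] | Hp]; [| exact Hp].
  assert (H2 : (2 | Z.gcd p q)) by (apply Z.gcd_greatest; [exists p'; lia | exact Hq]).
  rewrite Hcop in H2. apply Z.divide_pos_le in H2; lia.
Qed.

Lemma class_square_modulus_four (p q : Z) :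
  Z.gcd p q = 1 -> q mod 4 = 0 -> class_square_modulus p q (2 * q).
Proof.
  intros Hcop Hq4. set (s := q / 4).
  assert (Hs : q = 4 * s) by (unfold s; pose proof (Z.div_mod q 4); lia).
  destruct (odd_of_coprime_even p q Hcop ltac:(exists (2 * s); lia)) as [p' Hp].
  split.
  - intros a [t Ht]. exists (2 * s * t * t + p * t).
    replace a with (t * q + p) by lia. rewrite Hs. ring.
  - intros j. destruct (linear_congruence_solvable p q j Hcop) as [t1 [A HA]].
    destruct (consecutive_product_even t1) as [e He].
    (* [a^2 - p^2 + 2 q j = 2 q (p t + 2 s t^2 + j)], and for [t = t1 (1 + 2 s)] the bracket
       is [2 s t1 (t1 + p)] modulo [q], a multiple of [q] since [p] is odd. *)
    set (t := t1 + 2 * s * t1).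
    exists (p + q * t). split; [exists t; ring |].
    exists (A + e + p' * t1 + 2 * s * t1 * t1 * (1 + s)).
    replace j with (A * q - p * t1) by lia.
    transitivity (2 * q * q * (A + p' * t1 + 2 * s * t1 * t1 * (1 + s)) + q * q * (t1 * (t1 + 1))).
    + unfold t. rewrite Hs, Hp. ring.
    + rewrite He. ring.
Qed.

Lemma class_square_modulus_two (p q : Z) :
  Z.gcd p q = 1 -> q mod 4 = 2 -> class_square_modulus p q (4 * q).
Proof.
  intros Hcop Hq4. set (r' := q / 4).
  assert (Hr : q = 2 * (2 * r' + 1)) by (unfold r'; pose proof (Z.div_mod q 4); lia).
  destruct (odd_of_coprime_even p q Hcop ltac:(exists (2 * r' + 1); lia)) as [p' Hp].
  split.
  - intros a [t Ht]. destruct (consecutive_product_even t) as [e He].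
    exists (e + t * (r' * t + p')).
    replace a with (t * q + p) by lia.
    transitivity (2 * q * (t * (t + 1)) + 4 * q * t * (r' * t + p')).
    + rewrite Hr, Hp. ring.
    + rewrite He. ring.
  - intros j. destruct (linear_congruence_solvable p q j Hcop) as [t0 [A HA]].
    exists (p + q * (2 * t0)). split; [exists (2 * t0); ring |].
    exists (2 * (A + t0 * t0)).
    replace j with (A * q - p * t0) by lia. ring.
Qed.

Lemma class_square_residue (p q M : Z) :
  2 <= q -> Z.gcd p q = 1 -> (q | M) -> 0 < M -> class_square_modulus p q M ->
  exists c, 0 < c < M /\
    (forall a, (q | a - p) -> (M | a * a + c)) /\
    (forall k, exists a, (q | a - p) /\ (2 * q * q | a * a + c + M * k)).
Proof.
  intros Hq Hcop HqM HM [Hsq Hfill].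
  pose proof (Z.div_mod (- (p * p)) M ltac:(lia)) as Hdiv.
  pose proof (Z.mod_pos_bound (- (p * p)) M HM) as Hbound.
  set (c := - (p * p) mod M) in *. set (D := - (p * p) / M) in *.
  exists c. split; [split; [| lia] | split].
  - destruct (Z.eq_dec c 0) as [Hc0 | Hc0]; [exfalso | lia].
    assert (Hpp : (q | p * p)).
    { apply (Z.divide_trans _ M); [exact HqM |]. exists (- D). lia. }
    apply Z.gauss in Hpp; [| rewrite Z.gcd_comm; exact Hcop].
    assert (H1 : (q | 1)) by (rewrite <- Hcop; apply Z.gcd_greatest; auto with zarith).
    apply Z.divide_pos_le in H1; lia.
  - intros a Ha. replace (a * a + c) with (a * a - p * p + M * (- D)) by lia.
    apply Z.divide_add_r; [exact (Hsq a Ha) | apply Z.divide_factor_l].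
  - intros k. destruct (Hfill (k - D)) as [a [Ha Hdvd]].
    exists a. split; [exact Ha |].
    replace (a * a + c + M * k) with (a * a - p * p + M * (k - D)) by lia. exact Hdvd.
Qed.

Lemma Zle_of_divide_sub (M k r : Z) : (0 < k -> r < M -> (M | k - r) -> r <= k)%Z.
Proof. intros Hk Hr [X HX]. destruct (Z.le_gt_cases 0 X); nia. Qed.

Lemma Zsquare_neq_near (a b e : Z) :
  (0 <= b -> e <> 0 -> Z.abs e < 2 * a - 1 -> b * b <> a * a + e)%Z.
Proof.
  intros Hb He Hea Hsq.
  destruct (Z.lt_trichotomy b a) as [Hlt | [-> | Hgt]]; nia.
Qed.

Open Scope R_scope.

(* As [q s - a = (q^2 s^2 - a^2) / (q s + a)], a lower bound on the norm [q^2 s^2 - a^2]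
   bounds the distance when [a] is close to [q s]; otherwise the distance is at least [q]. *)
Lemma dist_above_ge_of_norm (q s a r : R) :
  0 < q -> 1 <= s -> 0 <= r <= 2 * q * q -> a < q * s ->
  (0 < a -> r <= q * q * (s * s) - a * a) -> r <= q * (2 * s + 1) * (q * s - a).
Proof.
  intros Hq Hs Hr Has Hnorm. destruct (Rle_lt_dec a 0) as [Ha | Ha].
  - assert (q <= q * s - a) by nra.
    assert (3 * q <= q * (2 * s + 1)) by nra.
    nra.
  - specialize (Hnorm Ha).
    assert (q * s + a <= q * (2 * s + 1)) by nra.
    nra.
Qed.

Lemma dist_below_ge_of_norm (q s a r : R) :
  0 < q -> 1 <= s -> 0 <= r <= 2 * q * q -> q * s < a ->
  r <= a * a - q * q * (s * s) -> r <= q * (2 * s + 1) * (a - q * s).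
Proof.
  intros Hq Hs Hr Has Hnorm. destruct (Rle_lt_dec q (a - q * s)) as [Hfar | Hnear].
  - assert (3 * q <= q * (2 * s + 1)) by nra.
    nra.
  - assert (a + q * s <= q * (2 * s + 1)) by nra.
    nra.
Qed.

Lemma sqrt_double_bounds (n N : nat) : (1 <= n)%nat -> (2 * n <= N)%nat ->
  sqrt (INR (2 * n)) * sqrt (INR (2 * n)) = 2 * IZR (Z.of_nat n) /\
  1 <= sqrt (INR (2 * n)) <= sqrt (INR N).
Proof.
  intros Hn1 Hn2. split; [| split].
  - rewrite sqrt_sqrt by apply pos_INR. rewrite mult_INR, (INR_IZR_INZ n). reflexivity.
  - rewrite <- sqrt_1. apply sqrt_le_1_alt. change 1 with (INR 1). apply le_INR. lia.
  - apply sqrt_le_1_alt, le_INR, Hn2.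
Qed.

Lemma class_point_in_window (p q e : Z) (T : R) : (0 < q)%Z ->
  (exists a0, (q | a0 - p)%Z /\ (2 * q * q | a0 * a0 + e)%Z) ->
  exists a, (q | a - p)%Z /\ (2 * q * q | a * a + e)%Z /\
    T - 2 * IZR q * IZR q < IZR a <= T.
Proof.
  intros Hq [a0 [Ha0 [z Hz]]].
  apply IZR_lt in Hq. assert (HQ : 0 < 2 * IZR q * IZR q) by nra.
  set (X := (T - IZR a0) / (2 * IZR q * IZR q)).
  destruct (base_Int_part X) as [Hm1 Hm2]. set (m := Int_part X) in *.
  assert (HX : T = IZR a0 + 2 * IZR q * IZR q * X) by (unfold X; field; lra).
  exists (a0 + 2 * q * q * m)%Z. split; [| split].
  - replace (a0 + 2 * q * q * m - p)%Z with (a0 - p + (2 * q * m) * q)%Z by ring.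
    apply Z.divide_add_r; [exact Ha0 | apply Z.divide_factor_r].
  - exists (z + 2 * a0 * m + 2 * q * q * m * m)%Z.
    transitivity (a0 * a0 + e + 2 * q * q * (2 * a0 * m + 2 * q * q * m * m))%Z; [ring |].
    rewrite Hz. ring.
  - rewrite plus_IZR, !mult_IZR. nra.
Qed.

Lemma pos_le_div_of_mul_eq (d e w W : R) :
  0 < W -> W <= w -> d * w = e -> 0 < e -> 0 < d <= e / W.
Proof.
  intros HW Hw Hdw He. assert (Hd : 0 < d) by nra.
  split; [exact Hd |]. apply Rle_div_r; [exact HW | nra].
Qed.

Lemma real_Glb_Rbar_between (E : R -> Prop) (lb y0 : R) :
  E y0 -> (forall y, E y -> lb <= y) -> lb <= real (Glb_Rbar E) <= y0.
Proof.
  intros H0 Hlb. destruct (Glb_Rbar_correct E) as [Hlow Hgreatest].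
  assert (Hle : Rbar_le (Glb_Rbar E) y0) by exact (Hlow y0 H0).
  assert (Hge : Rbar_le lb (Glb_Rbar E)) by (apply Hgreatest; intros y Hy; apply Hlb, Hy).
  destruct (Glb_Rbar E); simpl in *; try contradiction; lra.
Qed.

Lemma real_Lub_Rbar_between (E : R -> Prop) (ub y0 : R) :
  E y0 -> (forall y, E y -> y <= ub) -> y0 <= real (Lub_Rbar E) <= ub.
Proof.
  intros H0 Hub. destruct (Lub_Rbar_correct E) as [Hup Hleast].
  assert (Hge : Rbar_le y0 (Lub_Rbar E)) by exact (Hup y0 H0).
  assert (Hle : Rbar_le (Lub_Rbar E) ub) by (apply Hleast; intros y Hy; apply Hub, Hy).
  destruct (Lub_Rbar E); simpl in *; try contradiction; lra.
Qed.

Lemma is_lim_seq_sqrt_INR : is_lim_seq (fun N => sqrt (INR N)) p_infty.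
Proof.
  apply (filterlim_comp _ _ _ INR sqrt _ (Rbar_locally p_infty)).
  - exact is_lim_seq_INR.
  - apply (is_lim_sqrt_p (fun t => t) p_infty), is_lim_id.
Qed.

Lemma is_lim_seq_ratio_shift (u : nat -> R) (b : R) :
  is_lim_seq u p_infty -> is_lim_seq (fun N => u N / (u N + b)) 1.
Proof.
  intros Hu.
  assert (Hinv : is_lim_seq (fun N => / (u N + b)) 0).
  { change (Finite 0) with (Rbar_inv p_infty). apply is_lim_seq_inv; [| discriminate].
    apply (is_lim_seq_plus _ _ p_infty b); [exact Hu | apply is_lim_seq_const | reflexivity]. }
  apply is_lim_seq_ext_loc with (fun N => 1 - b * / (u N + b)).
  - apply is_lim_seq_spec in Hu. destruct (Hu (1 - b)) as [N0 HN0].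
    exists N0. intros N HN. specialize (HN0 N HN). field. lra.
  - replace (Finite 1) with (Finite (1 - b * 0)) by (f_equal; ring).
    apply is_lim_seq_minus'; [apply is_lim_seq_const |].
    exact (is_lim_seq_scal_l _ b 0 Hinv).
Qed.

Section Gaps.

Variables (p q M c : Z).
Hypotheses (Hq : (2 <= q)%Z) (HM : (M | 2 * q * q)%Z) (Hc : (0 < c < M)%Z)
  (Hclass : forall a, (q | a - p)%Z -> (M | a * a + c)%Z)
  (Hfill : forall k, exists a, (q | a - p)%Z /\ (2 * q * q | a * a + c + M * k)%Z).

Local Notation x := (IZR p / IZR q).

Lemma IZR_q_ge_2 : 2 <= IZR q.
Proof. apply IZR_le, Hq. Qed.

Lemma IZR_M_le_2qq : IZR M <= 2 * IZR q * IZR q.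
Proof.
  rewrite <- !mult_IZR. apply IZR_le, Z.divide_pos_le; [nia | exact HM].
Qed.

Lemma norm_ge_residue_above (a nz : Z) :
  (q | a - p)%Z -> (0 < 2 * q * q * nz - a * a)%Z -> (c <= 2 * q * q * nz - a * a)%Z.
Proof.
  intros Ha Hpos. apply (Zle_of_divide_sub M); [exact Hpos | lia |].
  replace (2 * q * q * nz - a * a - c)%Z with (2 * q * q * nz - (a * a + c))%Z by ring.
  apply Z.divide_sub_r; [apply Z.divide_mul_l, HM | apply Hclass, Ha].
Qed.

Lemma norm_ge_residue_below (a nz : Z) :
  (q | a - p)%Z -> (0 < a * a - 2 * q * q * nz)%Z -> (M - c <= a * a - 2 * q * q * nz)%Z.
Proof.
  intros Ha Hpos. apply (Zle_of_divide_sub M); [exact Hpos | lia |].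
  replace (a * a - 2 * q * q * nz - (M - c))%Z
    with (a * a + c - 2 * q * q * nz - M)%Z by ring.
  apply Z.divide_sub_r; [apply Z.divide_sub_r |]; [apply Hclass, Ha | | apply Z.divide_refl].
  apply Z.divide_mul_l, HM.
Qed.

Lemma f2_offset_repr (N : nat) (y : R) : f2 N y -> exists (n : nat) (a : Z),
  (1 <= n)%nat /\ (2 * n <= N)%nat /\ (q | a - p)%Z /\
  IZR q * (y - x) = IZR q * sqrt (INR (2 * n)) - IZR a.
Proof.
  intros [n [K [Hn1 [Hn2 [_ ->]]]]]. pose proof IZR_q_ge_2.
  exists n, (p - q * K)%Z. split; [exact Hn1 | split; [exact Hn2 | split]].
  - exists (- K)%Z. ring.
  - rewrite minus_IZR, mult_IZR. field. lra.
Qed.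

Lemma f2_above_ge (N : nat) (y : R) : f2 N y -> x < y ->
  IZR c <= IZR q * IZR q * (2 * sqrt (INR N) + 1) * (y - x).
Proof.
  intros Hy Hxy. destruct (f2_offset_repr N y Hy) as [n [a [Hn1 [Hn2 [Ha Hya]]]]].
  destruct (sqrt_double_bounds n N Hn1 Hn2) as [Hs2 [Hs1 HsN]].
  set (s := sqrt (INR (2 * n))) in *.
  pose proof IZR_q_ge_2. pose proof IZR_M_le_2qq.
  assert (Hc0 : 0 < IZR c < IZR M) by (split; apply IZR_lt; lia).
  assert (Hqs : IZR a < IZR q * s) by nra.
  assert (Hnorm : IZR (2 * q * q * Z.of_nat n - a * a) = IZR q * IZR q * (s * s) - IZR a * IZR a)
    by (rewrite Hs2, minus_IZR, !mult_IZR; ring).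
  assert (Hbound : IZR c <= IZR q * (2 * s + 1) * (IZR q * s - IZR a)).
  { apply dist_above_ge_of_norm; [lra | lra | lra | exact Hqs |].
    intros Ha0. rewrite <- Hnorm.
    apply IZR_le, norm_ge_residue_above; [exact Ha |].
    apply lt_IZR. rewrite Hnorm.
    assert (0 < (IZR q * s - IZR a) * (IZR q * s + IZR a)) by (apply Rmult_lt_0_compat; lra).
    lra. }
  rewrite <- Hya in Hbound. apply (Rle_trans _ _ _ Hbound).
  replace (IZR q * IZR q * (2 * sqrt (INR N) + 1) * (y - x))
    with (IZR q * (2 * sqrt (INR N) + 1) * (IZR q * (y - x))) by ring.
  apply Rmult_le_compat_r; [nra |]. apply Rmult_le_compat_l; lra.
Qed.

Lemma f2_below_ge (N : nat) (y : R) : f2 N y -> y < x ->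
  IZR (M - c) <= IZR q * IZR q * (2 * sqrt (INR N) + 1) * (x - y).
Proof.
  intros Hy Hxy. destruct (f2_offset_repr N y Hy) as [n [a [Hn1 [Hn2 [Ha Hya]]]]].
  destruct (sqrt_double_bounds n N Hn1 Hn2) as [Hs2 [Hs1 HsN]].
  set (s := sqrt (INR (2 * n))) in *.
  pose proof IZR_q_ge_2. pose proof IZR_M_le_2qq.
  assert (Hd : 0 < IZR (M - c) < IZR M) by (split; apply IZR_lt; lia).
  assert (Hqs : IZR q * s < IZR a) by nra.
  assert (Hnorm : IZR (a * a - 2 * q * q * Z.of_nat n) = IZR a * IZR a - IZR q * IZR q * (s * s))
    by (rewrite Hs2, minus_IZR, !mult_IZR; ring).
  assert (Hbound : IZR (M - c) <= IZR q * (2 * s + 1) * (IZR a - IZR q * s)).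
  { apply dist_below_ge_of_norm; [lra | lra | lra | exact Hqs |].
    rewrite <- Hnorm.
    apply IZR_le, norm_ge_residue_below; [exact Ha |].
    apply lt_IZR. rewrite Hnorm.
    assert (0 < (IZR a - IZR q * s) * (IZR a + IZR q * s)) by (apply Rmult_lt_0_compat; nra).
    lra. }
  apply (Rle_trans _ _ _ Hbound).
  replace (IZR a - IZR q * s) with (IZR q * (x - y)) by lra.
  replace (IZR q * IZR q * (2 * sqrt (INR N) + 1) * (x - y))
    with (IZR q * (2 * sqrt (INR N) + 1) * (IZR q * (x - y))) by ring.
  apply Rmult_le_compat_r; [nra |]. apply Rmult_le_compat_l; lra.
Qed.

Lemma f2_point_of_norm (a e nz : Z) (N : nat) :
  (q | a - p)%Z -> (a * a + e = 2 * q * q * nz)%Z -> (e <> 0)%Z -> (Z.abs e < a)%Z ->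
  (1 <= nz)%Z -> (2 * nz <= Z.of_nat N)%Z ->
  exists y w, f2 N y /\ 2 * IZR a - 1 <= w /\ IZR q * (y - x) * w = IZR e.
Proof.
  intros [t Ht] Hnorm He Hea Hnz1 HnzN. pose proof IZR_q_ge_2.
  set (n := Z.to_nat nz). assert (Hn : Z.of_nat n = nz) by (unfold n; lia).
  destruct (sqrt_double_bounds n N ltac:(lia) ltac:(lia)) as [Hs2 [Hs1 _]].
  set (s := sqrt (INR (2 * n))) in *. rewrite Hn in Hs2.
  assert (Hqs2 : IZR q * IZR q * (s * s) = IZR a * IZR a + IZR e).
  { rewrite Hs2. apply IZR_eq in Hnorm. rewrite plus_IZR, !mult_IZR in Hnorm. lra. }
  assert (Hae : - IZR a < IZR e) by (rewrite <- opp_IZR; apply IZR_lt; lia).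
  assert (Ha1 : 1 <= IZR a) by (apply IZR_le; lia).
  exists (s + IZR (- t)), (IZR q * s + IZR a). split; [| split].
  - exists n, (- t)%Z. split; [lia | split; [lia | split; [| reflexivity]]].
    intros [m Hm]. fold s in Hm.
    assert (Hm2 : (2 * nz = Z.of_nat m * Z.of_nat m)%Z).
    { apply eq_IZR. rewrite !mult_IZR, <- INR_IZR_INZ, <- Hm. lra. }
    apply (Zsquare_neq_near a (q * Z.of_nat m) e); [lia | exact He | lia |].
    replace (q * Z.of_nat m * (q * Z.of_nat m))%Z with (q * q * (Z.of_nat m * Z.of_nat m))%Z
      by ring.
    rewrite <- Hm2. lia.
  - assert (Hqs : IZR a - 1 <= IZR q * s).
    { destruct (Rle_lt_dec (IZR a - 1) (IZR q * s)) as [Hle | Hlt]; [exact Hle | exfalso].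
      assert (IZR q * s * (IZR q * s) < (IZR a - 1) * (IZR a - 1))
        by (apply Rmult_le_0_lt_compat; nra).
      nra. }
    lra.
  - replace (IZR q * (s + IZR (- t) - x)) with (IZR q * s - IZR a).
    + transitivity (IZR q * IZR q * (s * s) - IZR a * IZR a); [ring | lra].
    + replace a with (t * q + p)%Z by lia. rewrite opp_IZR, plus_IZR, mult_IZR. field. lra.
Qed.

Lemma f2_point_near (k : Z) (N : nat) :
  (c + M * k <> 0)%Z -> (Z.abs (c + M * k) < M)%Z -> 4 * IZR q <= sqrt (INR N) ->
  exists y w, f2 N y /\ 2 * IZR q * sqrt (INR N) - 4 * IZR q * IZR q - 3 <= w /\
    IZR q * (y - x) * w = IZR (c + M * k).
Proof.
  intros He Hea HN. set (e := (c + M * k)%Z) in *.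
  (* [a] just below [q sqrt N] keeps [2 n <= N] and makes [q s + a] about [2 q sqrt N]. *)
  set (v := sqrt (INR N)) in *.
  pose proof IZR_q_ge_2.
  assert (HMq : (M <= 2 * q * q)%Z) by (apply Z.divide_pos_le; [nia | exact HM]).
  assert (Hv2 : v * v = IZR (Z.of_nat N))
    by (unfold v; rewrite sqrt_sqrt, INR_IZR_INZ; [reflexivity | apply pos_INR]).
  assert (Hqv : 4 * IZR q * IZR q <= IZR q * v) by nra.
  destruct (class_point_in_window p q e (IZR q * v - 1) ltac:(lia))
    as [a [Ha [[nz Hnz] [Hlo Hhi]]]].
  { destruct (Hfill k) as [a0 [Ha0 Hd0]]. exists a0. split; [exact Ha0 |].
    unfold e. rewrite Z.add_assoc. exact Hd0. }
  assert (Haq : (2 * q * q <= a)%Z).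
  { assert (Hlt : IZR (2 * q * q - 1) < IZR a) by (rewrite minus_IZR, !mult_IZR; lra).
    apply lt_IZR in Hlt. lia. }
  assert (Hnz1 : (1 <= nz)%Z) by nia.
  assert (HnzN : (2 * nz <= Z.of_nat N)%Z).
  { apply (Z.mul_le_mono_pos_l _ _ (q * q)); [nia |].
    apply le_IZR. rewrite !mult_IZR, <- Hv2.
    replace (IZR q * IZR q * (2 * IZR nz)) with (IZR (a * a + e))
      by (rewrite Hnz, !mult_IZR; ring).
    rewrite plus_IZR, mult_IZR.
    assert (IZR e < 2 * IZR q * IZR q) by (rewrite <- !mult_IZR; apply IZR_lt; lia).
    assert (0 <= IZR a) by (apply IZR_le; nia).
    nra. }
  destruct (f2_point_of_norm a e nz N Ha ltac:(lia) He ltac:(lia) Hnz1 HnzN)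
    as [y [w [Hy [Hw Hyw]]]].
  exists y, w. split; [exact Hy | split; [lra | exact Hyw]].
Qed.

Lemma gap_bounds (N : nat) : 4 * IZR q <= sqrt (INR N) ->
  IZR M / (IZR q * IZR q * (2 * sqrt (INR N) + 1)) <= gap x (f2 N) <=
  IZR M / (IZR q * (2 * IZR q * sqrt (INR N) - 4 * IZR q * IZR q - 3)).
Proof.
  intros HN. pose proof IZR_q_ge_2.
  set (D := IZR q * IZR q * (2 * sqrt (INR N) + 1)).
  set (W := 2 * IZR q * sqrt (INR N) - 4 * IZR q * IZR q - 3).
  assert (HD : 0 < D) by (unfold D; nra).
  assert (HW0 : 0 < W) by (unfold W; nra).
  assert (HW : 0 < IZR q * W) by nra.
  assert (Hc0 : 0 < IZR c) by (apply IZR_lt; lia).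
  assert (Hd0 : 0 < IZR (M - c)) by (apply IZR_lt; lia).
  destruct (f2_point_near 0 N ltac:(lia) ltac:(lia) HN) as [yU [wU [HyU [HwU HU]]]].
  destruct (f2_point_near (-1) N ltac:(lia) ltac:(lia) HN) as [yL [wL [HyL [HwL HL]]]].
  fold W in HwU, HwL.
  replace (c + M * 0)%Z with c in HU by ring.
  replace (c + M * -1)%Z with (- (M - c))%Z in HL by ring. rewrite opp_IZR in HL.
  assert (HqwU : IZR q * W <= IZR q * wU) by (apply Rmult_le_compat_l; lra).
  assert (HqwL : IZR q * W <= IZR q * wL) by (apply Rmult_le_compat_l; lra).
  destruct (pos_le_div_of_mul_eq (yU - x) (IZR c) (IZR q * wU) (IZR q * W) HW HqwU
    ltac:(rewrite <- HU; ring) Hc0) as [HU1 HU2].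
  destruct (pos_le_div_of_mul_eq (x - yL) (IZR (M - c)) (IZR q * wL) (IZR q * W) HW HqwL
    ltac:(rewrite <- (Ropp_involutive (IZR (M - c))), <- HL; ring) Hd0) as [HL1 HL2].
  destruct (real_Glb_Rbar_between (fun y => f2 N y /\ x < y) (x + IZR c / D) yU)
    as [G1 G2]; [split; [exact HyU | lra] | |].
  { intros y [Hy Hxy]. pose proof (f2_above_ge N y Hy Hxy).
    enough (IZR c / D <= y - x) by lra. apply Rle_div_l; [exact HD | unfold D; lra]. }
  destruct (real_Lub_Rbar_between (fun y => f2 N y /\ y < x) (x - IZR (M - c) / D) yL)
    as [L1 L2]; [split; [exact HyL | lra] | |].
  { intros y [Hy Hxy]. pose proof (f2_below_ge N y Hy Hxy).
    enough (IZR (M - c) / D <= x - y) by lra. apply Rle_div_l; [exact HD | unfold D; lra]. }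
  unfold gap. rewrite minus_IZR in *.
  replace (IZR M / D) with (IZR c / D + (IZR M - IZR c) / D) by (field; lra).
  replace (IZR M / (IZR q * W)) with (IZR c / (IZR q * W) + (IZR M - IZR c) / (IZR q * W))
    by (field; lra).
  lra.
Qed.

Lemma is_lim_G2seq_of_residue : is_lim_seq (G2seq x) (IZR M / (IZR q * IZR q)).
Proof.
  pose proof IZR_q_ge_2. pose proof is_lim_seq_sqrt_INR as Hv.
  set (L := IZR M / (IZR q * IZR q)).
  set (b := (4 * IZR q * IZR q + 3) / (2 * IZR q)).
  apply is_lim_seq_le_le_loc with
    (u := fun N => L * (sqrt (INR N) / (sqrt (INR N) + 1 / 2)))
    (w := fun N => L * (sqrt (INR N) / (sqrt (INR N) + - b))).
  - apply is_lim_seq_spec in Hv. destruct (Hv (4 * IZR q + b)) as [N0 HN0].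
    exists N0. intros N HN. specialize (HN0 N HN). simpl in HN0.
    assert (Hb : 0 < b) by (unfold b; apply Rdiv_lt_0_compat; nra).
    destruct (gap_bounds N ltac:(lra)) as [Glo Ghi].
    unfold G2seq. set (v := sqrt (INR N)) in *. split.
    + replace (L * (v / (v + 1 / 2)))
        with (2 * v * (IZR M / (IZR q * IZR q * (2 * v + 1)))) by (unfold L; field; lra).
      apply Rmult_le_compat_l; [lra | exact Glo].
    + replace (L * (v / (v + - b)))
        with (2 * v * (IZR M / (IZR q * (2 * IZR q * v - 4 * IZR q * IZR q - 3)))).
      * apply Rmult_le_compat_l; [lra | exact Ghi].
      * assert (H2qb : 2 * IZR q * b = 4 * IZR q * IZR q + 3) by (unfold b; field; lra).
        assert (HW : 0 < 2 * IZR q * v - 4 * IZR q * IZR q - 3) by nra.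
        unfold L, b. field. repeat split; lra.
  - replace (Finite L) with (Rbar_mult L 1) by (simpl; f_equal; ring).
    apply is_lim_seq_scal_l, is_lim_seq_ratio_shift, Hv.
  - replace (Finite L) with (Rbar_mult L 1) by (simpl; f_equal; ring).
    apply is_lim_seq_scal_l, is_lim_seq_ratio_shift, Hv.
Qed.

End Gaps.

Lemma is_lim_G2seq_class_square_modulus (p q M : Z) :
  (2 <= q)%Z -> Z.gcd p q = 1%Z -> (q | M)%Z -> (M | 2 * q * q)%Z -> (0 < M)%Z ->
  class_square_modulus p q M ->
  is_lim_seq (G2seq (IZR p / IZR q)) (IZR M / (IZR q * IZR q)).
Proof.
  intros Hq Hcop HqM HM HM0 Hmod.
  destruct (class_square_residue p q M Hq Hcop HqM HM0 Hmod) as [c [Hc [Hclass Hfill]]].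
  exact (is_lim_G2seq_of_residue p q M c Hq HM Hc Hclass Hfill).
Qed.

Theorem mainTheorem2 (p q : Z) (Hcop : Z.gcd p q = 1%Z) (Hq : (2 <= q)%Z) :
  ((q mod 4 = 2)%Z -> is_lim_seq (G2seq (IZR p / IZR q)) (4 / IZR q)) /\
  ((q mod 4 = 0)%Z -> is_lim_seq (G2seq (IZR p / IZR q)) (2 / IZR q)) /\
  (Z.odd q = true -> is_lim_seq (G2seq (IZR p / IZR q)) (1 / IZR q)).
Proof.
  assert (Hq0 : IZR q <> 0) by (apply not_0_IZR; lia).
  pose proof (Z.div_mod q 4 ltac:(lia)) as Hq4.
  split; [| split]; intros Hcase.
  - replace (4 / IZR q) with (IZR (4 * q) / (IZR q * IZR q))
      by (rewrite mult_IZR; field; exact Hq0).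
    apply is_lim_G2seq_class_square_modulus; try lia.
    + apply Z.divide_factor_r.
    + exists (2 * (q / 4) + 1)%Z. nia.
    + exact (class_square_modulus_two p q Hcop Hcase).
  - replace (2 / IZR q) with (IZR (2 * q) / (IZR q * IZR q))
      by (rewrite mult_IZR; field; exact Hq0).
    apply is_lim_G2seq_class_square_modulus; try lia.
    + apply Z.divide_factor_r.
    + exists q. ring.
    + exact (class_square_modulus_four p q Hcop Hcase).
  - replace (1 / IZR q) with (IZR q / (IZR q * IZR q)) by (field; exact Hq0).
    apply is_lim_G2seq_class_square_modulus; try lia.
    + apply Z.divide_refl.
    + exists (2 * q)%Z. ring.
    + exact (class_square_modulus_odd p q Hcop Hcase).
Qed.
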